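(* Let $\alpha>0$ and $v>-\frac{7}{8}$, and let $$w_{\alpha,v}(z)=z+\sum_{n=1}^{\infty}a_n z^{n+1},\qquad a_n=\frac{(-1)^n(2n+\alpha)}{\alpha\, 4^n\, n!\,(v+1)_n},$$ for $z\in\mathcal{U}=\{z\in\mathbb{C}:|z|<1\}$, and for a nonnegative integer $m$ let $(w_{\alpha,v})_m(z)=z+\sum_{n=1}^{m}a_n z^{n+1}$ be its $m$-th partial sum. If $$8(\alpha-4)v+5\alpha-32\ge 0,$$ then for all $z\in\mathcal{U}$, $$\operatorname{Re}\left\{\frac{w_{\alpha,v}(z)}{(w_{\alpha,v})_m(z)}\right\}\ge \frac{8(\alpha-4)v+5\alpha-32}{(8v+7)\alpha}$$ and $$\operatorname{Re}\left\{\frac{(w_{\alpha,v})_m(z)}{w_{\alpha,v}(z)}\right\}\ge \frac{(8v+7)\alpha}{(8v+7)\alpha+32v+2\alpha+32}.$$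
   Context: $(\mu)_n=\mu(\mu+1)\cdots(\mu+n-1)$ is the Pochhammer symbol. The function $w_{\alpha,v}$ is the normalized Dini function $\frac{2^v}{\alpha}\Gamma(v+1)z^{1-v/2}\big((\alpha-v)J_v(\sqrt z)+\sqrt z J_v'(\sqrt z)\big)$, with $J_v$ the Bessel function of the first kind. The quotients are understood as analytic functions on $\mathcal{U}$ (taking the value $1$ at $z=0$). *)

From Stdlib Require Import Reals Arith.
From Coquelicot Require Import Coquelicot.
Open Scope R_scope.

Fixpoint poch (mu : R) (n : nat) : R :=
  match n with
  | O => 1
  | S k => poch mu k * (mu + INR k)
  end.

Definition dini_coef (alpha v : R) (n : nat) : R :=
  (-1) ^ n * (2 * INR n + alpha) /
  (alpha * 4 ^ n * INR (Factorial.fact n) * poch (v + 1) n).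

Definition CSeries (f : nat -> C) : C :=
  (Series (fun k => Re (f k)), Series (fun k => Im (f k))).

(* w_{alpha,v}(z) = z + sum_{n>=1} a_n z^{n+1}  (term k <-> n = k+1) *)
Definition w_dini (alpha v : R) (z : C) : C :=
  Cplus z (CSeries (fun k => Cmult (RtoC (dini_coef alpha v (S k)))
                                   (pow_n (K:=C_Ring) z (S (S k))))).

Definition w_dini_m (alpha v : R) (m : nat) (z : C) : C :=
  Cplus z (sum_n_m (G:=C_AbelianMonoid)
             (fun n => Cmult (RtoC (dini_coef alpha v n)) (pow_n (K:=C_Ring) z (S n)))
             1 m).

(* the quotients, understood as analytic functions with value 1 at z = 0 *)
Definition quot_w_wm (alpha v : R) (m : nat) (z : C) : C :=
  if Req_EM_T (Re z) 0 then if Req_EM_T (Im z) 0 then RtoC 1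
    else Cdiv (w_dini alpha v z) (w_dini_m alpha v m z)
  else Cdiv (w_dini alpha v z) (w_dini_m alpha v m z).

Definition quot_wm_w (alpha v : R) (m : nat) (z : C) : C :=
  if Req_EM_T (Re z) 0 then if Req_EM_T (Im z) 0 then RtoC 1
    else Cdiv (w_dini_m alpha v m z) (w_dini alpha v z)
  else Cdiv (w_dini_m alpha v m z) (w_dini alpha v z).

From Stdlib Require Import Reals Lra Lia Psatz.
From Coquelicot Require Import Coquelicot.
Open Scope R_scope.

(* With [c = (8v+7) alpha / (32v+2alpha+32)], the hypothesis says [c >= 1] and
   the two bounds are [1 - 1/c] and [c/(1+c)].  Both follow once
   [c |w - w_m| < |w_m|], i.e. once [w/w_m] lies in the disc of radius [1/c]
   about [1].  The coefficients are dominated by a geometric sequence,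
   [|a_n| <= (8+2alpha)/alpha * (8(v+1))^-n], because [(v+1)_n >= (v+1)^n]
   and [(2n+alpha) 2^n <= (8+2alpha) n!]; summing the geometric bounds on the
   head and on the tail of the series, the required inequality reduces to
   [c (8+2alpha)/alpha * x/(1-x) <= 1] with [x = 1/(8(v+1))], which is
   [v >= -3/4], a consequence of [c >= 1]. *)

Lemma sum_n_m_geom (x : R) (a N : nat) : (a <= S N)%nat ->
  (1 - x) * sum_n_m (fun k => x ^ k) a N = x ^ a - x ^ S N.
Proof.
  induction N as [|N IH]; intros Ha.
  - destruct a as [|[|a]]; [|  |lia].
    + rewrite sum_n_n. simpl. ring.
    + rewrite sum_n_m_zero by lia. simpl. change (zero : R_AbelianMonoid) with 0. ring.
  - destruct (Nat.eq_dec a (S (S N))) as [->|Hne].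
    + rewrite sum_n_m_zero by lia. change (zero : R_AbelianMonoid) with 0. ring.
    + rewrite sum_n_Sm by lia. change (plus (G:=R_AbelianMonoid)) with Rplus.
      rewrite Rmult_plus_distr_l, IH by lia. simpl. ring.
Qed.

Lemma sum_n_m_le_loc (u w : nat -> R) (a N : nat) :
  (forall k, (a <= k <= N)%nat -> u k <= w k) -> sum_n_m u a N <= sum_n_m w a N.
Proof.
  intros H.
  rewrite (sum_n_m_ext_loc u (fun k => Rmin (u k) (w k))).
  2:{ intros k Hk. specialize (H k Hk). unfold Rmin. destruct Rle_dec; lra. }
  apply sum_n_m_le. intros k. apply Rmin_r.
Qed.

Lemma pow2_le_2fact (n : nat) : (2 ^ n <= 2 * Factorial.fact n)%nat.
Proof.
  induction n as [|[|n] IH]; simpl in *; lia.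
Qed.

Lemma mul_pow2_le_4fact (n : nat) : (n * 2 ^ n <= 4 * Factorial.fact n)%nat.
Proof.
  destruct n as [|n]; [lia|].
  pose proof (pow2_le_2fact n). simpl. nia.
Qed.

Lemma pow_le_poch (p : R) (n : nat) : 0 < p -> p ^ n <= poch p n.
Proof.
  intros Hp. induction n as [|n IH]; simpl; [lra|].
  pose proof (pos_INR n). rewrite Rmult_comm.
  apply Rmult_le_compat; try lra. apply pow_le; lra.
Qed.

Lemma affine_mul_pow2_le_fact (alpha : R) (n : nat) : 0 <= alpha ->
  (2 * INR n + alpha) * 2 ^ n <= (8 + 2 * alpha) * INR (Factorial.fact n).
Proof.
  intros Ha.
  pose proof (le_INR _ _ (pow2_le_2fact n)) as H1.
  pose proof (le_INR _ _ (mul_pow2_le_4fact n)) as H2.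
  rewrite !mult_INR, !pow_INR in H1; rewrite !mult_INR, !pow_INR in H2.
  replace (INR 2) with 2 in H1, H2 by (simpl; lra).
  replace (INR 4) with 4 in H2 by (simpl; lra).
  pose proof (Rmult_le_compat_l alpha _ _ Ha H1). lra.
Qed.

Lemma Rabs_dini_coef_le (alpha v : R) (n : nat) : 0 < alpha -> 0 < v + 1 ->
  Rabs (dini_coef alpha v n) <= (8 + 2 * alpha) / alpha * (/ (8 * (v + 1))) ^ n.
Proof.
  intros Ha Hp. unfold dini_coef. set (p := v + 1) in *.
  pose proof (pow_le_poch p n Hp) as Hpoch.
  pose proof (affine_mul_pow2_le_fact alpha n (Rlt_le _ _ Ha)) as Hfact.
  pose proof (pos_INR n) as Hn.
  assert (Hf : 0 < INR (Factorial.fact n)) by apply (lt_0_INR _ (Factorial.lt_O_fact n)).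
  assert (H4 : 0 < 4 ^ n) by (apply pow_lt; lra).
  assert (H2 : 0 < 2 ^ n) by (apply pow_lt; lra).
  assert (Hpn : 0 < p ^ n) by (apply pow_lt; lra).
  assert (Hden : 0 < alpha * 4 ^ n * INR (Factorial.fact n) * poch p n).
  { repeat apply Rmult_lt_0_compat; lra. }
  rewrite Rabs_div, Rabs_mult, pow_1_abs, Rmult_1_l, !Rabs_pos_eq by lra.
  apply Rle_trans with ((2 * INR n + alpha) / (alpha * 4 ^ n * INR (Factorial.fact n) * p ^ n)).
  { apply Rmult_le_compat_l; [lra|]. apply Rinv_le_contravar.
    - repeat apply Rmult_lt_0_compat; lra.
    - apply Rmult_le_compat_l; [|lra]. left; repeat apply Rmult_lt_0_compat; lra. }
  set (F := INR (Factorial.fact n)) in *.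
  set (D := alpha * 4 ^ n * F * p ^ n * 2 ^ n).
  assert (HD : 0 < D) by (unfold D; repeat apply Rmult_lt_0_compat; lra).
  replace ((/ (8 * p)) ^ n) with (/ (4 ^ n * 2 ^ n * p ^ n))
    by (rewrite pow_inv, <- !Rpow_mult_distr; do 2 f_equal; ring).
  replace ((2 * INR n + alpha) / (alpha * 4 ^ n * F * p ^ n)) with ((2 * INR n + alpha) * 2 ^ n / D)
    by (unfold D; field; lra).
  replace ((8 + 2 * alpha) / alpha * / (4 ^ n * 2 ^ n * p ^ n)) with ((8 + 2 * alpha) * F / D)
    by (unfold D; field; lra).
  apply Rmult_le_compat_r; [left; apply Rinv_0_lt_compat|]; assumption.
Qed.

Lemma Re_sum_n_m (f : nat -> C) (a b : nat) :
  Re (sum_n_m (G:=C_AbelianMonoid) f a b) = sum_n_m (fun k => Re (f k)) a b.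
Proof.
  unfold sum_n_m, Iter.iter_nat.
  induction (seq.iota a (S b - a)) as [|k l IH]; [reflexivity|].
  exact (f_equal (Rplus _) IH).
Qed.

Lemma Im_sum_n_m (f : nat -> C) (a b : nat) :
  Im (sum_n_m (G:=C_AbelianMonoid) f a b) = sum_n_m (fun k => Im (f k)) a b.
Proof.
  unfold sum_n_m, Iter.iter_nat.
  induction (seq.iota a (S b - a)) as [|k l IH]; [reflexivity|].
  exact (f_equal (Rplus _) IH).
Qed.

Lemma Cmod_pow_n (z : C) (k : nat) : Cmod (pow_n (K:=C_Ring) z k) = Cmod z ^ k.
Proof.
  induction k as [|k IH]; simpl; [apply Cmod_1|].
  change (mult (K:=C_Ring) z (pow_n z k)) with (Cmult z (pow_n (K:=C_Ring) z k)).
  rewrite Cmod_mult, IH. reflexivity.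
Qed.

Lemma Cmod_sum_n_m_le (f : nat -> C) (a b : nat) :
  Cmod (sum_n_m (G:=C_AbelianMonoid) f a b) <= sum_n_m (fun k => Cmod (f k)) a b.
Proof.
  rewrite Cmod_norm.
  eapply Rle_trans; [apply (norm_sum_n_m (K:=R_AbsRing) (V:=C_R_NormedModule))|].
  apply sum_n_m_le. intros k. rewrite Cmod_norm. apply Rle_refl.
Qed.

Lemma Cmod_sqr (u : C) : Cmod u * Cmod u = Re u * Re u + Im u * Im u.
Proof. pose proof (Cmod2_alt u). simpl in H. nra. Qed.

Lemma im_le_Cmod (c : C) : Rabs (Im c) <= Cmod c.
Proof.
  rewrite <- (Rabs_pos_eq (Cmod c)) by apply Cmod_ge_0.
  apply Rsqr_le_abs_0. unfold Rsqr. rewrite Cmod_sqr. nra.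
Qed.

(* The modulus of a limit is compared with its bound through the squared
   modulus, which is a polynomial in the real and imaginary parts. *)
Lemma Cmod_CSeries_sub_le (g : nat -> C) (s : C) (B : R) :
  ex_series (fun k => Re (g k)) -> ex_series (fun k => Im (g k)) ->
  eventually (fun N => Cmod (Cminus (sum_n g N) s) <= B) ->
  Cmod (Cminus (CSeries g) s) <= B.
Proof.
  intros Hre Him [N0 HB].
  assert (HB0 : 0 <= B) by (eapply Rle_trans; [apply Cmod_ge_0|apply (HB N0); lia]).
  set (u := fun N => Cminus (sum_n g N) s).
  assert (Lre : is_lim_seq (fun N => Re (u N)) (Re (Cminus (CSeries g) s))).
  { apply (is_lim_seq_ext (fun N => sum_n (fun k => Re (g k)) N - Re s)).
    { intros N. unfold u, sum_n. rewrite <- Re_sum_n_m. destruct (sum_n_m _ _ _), s. simpl. ring. }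
    apply is_lim_seq_minus'; [apply (Series_correct _ Hre)|apply is_lim_seq_const]. }
  assert (Lim : is_lim_seq (fun N => Im (u N)) (Im (Cminus (CSeries g) s))).
  { apply (is_lim_seq_ext (fun N => sum_n (fun k => Im (g k)) N - Im s)).
    { intros N. unfold u, sum_n. rewrite <- Im_sum_n_m. destruct (sum_n_m _ _ _), s. simpl. ring. }
    apply is_lim_seq_minus'; [apply (Series_correct _ Him)|apply is_lim_seq_const]. }
  assert (Hsq : Cmod (Cminus (CSeries g) s) * Cmod (Cminus (CSeries g) s) <= B * B).
  { rewrite Cmod_sqr.
    refine (is_lim_seq_le_loc (fun N => Re (u N) * Re (u N) + Im (u N) * Im (u N))
              (fun _ => B * B) (Re (Cminus (CSeries g) s) * Re (Cminus (CSeries g) s)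
                + Im (Cminus (CSeries g) s) * Im (Cminus (CSeries g) s)) _ _ _ (is_lim_seq_const _)).
    - exists N0. intros N HN. rewrite <- Cmod_sqr.
      apply Rmult_le_compat; try apply Cmod_ge_0; apply HB, HN.
    - apply is_lim_seq_plus'; apply is_lim_seq_mult'; assumption. }
  pose proof (Cmod_ge_0 (Cminus (CSeries g) s)). nra.
Qed.

Section GeometricDomination.

Variables (f : nat -> C) (M x : R).
Hypotheses (HM : 0 <= M) (Hx : 0 <= x < 1)
  (Hf : forall n, (1 <= n)%nat -> Cmod (f n) <= M * x ^ n).

Lemma Cmod_sum_n_m_le_geom (a N : nat) : (1 <= a <= S N)%nat ->
  Cmod (sum_n_m (G:=C_AbelianMonoid) f a N) <= M * (x ^ a - x ^ S N) / (1 - x).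
Proof.
  intros Ha. eapply Rle_trans; [apply Cmod_sum_n_m_le|].
  eapply Rle_trans; [apply (sum_n_m_le_loc _ (fun k => M * x ^ k)); intros; apply Hf; lia|].
  rewrite (sum_n_m_mult_l (K:=R_Ring) M (fun k => x ^ k)).
  change (@sum_n_m (Ring.AbelianMonoid R_Ring)) with (@sum_n_m R_AbelianMonoid).
  apply Req_le. change (mult M ?s) with (M * s).
  rewrite <- (sum_n_m_geom x a N) by lia. field. lra.
Qed.

Lemma ex_series_shift_of_le_Cmod (h : C -> R) :
  (forall c, Rabs (h c) <= Cmod c) -> ex_series (fun k => h (f (S k))).
Proof.
  intros Hh.
  apply (ex_series_le (K:=R_AbsRing) (V:=R_CompleteNormedModule) _ (fun k => M * x * x ^ k)).
  - intros k. change (norm ?y) with (Rabs y). eapply Rle_trans; [apply Hh|].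
    eapply Rle_trans; [apply Hf; lia|]. simpl. lra.
  - apply (ex_series_scal_l (V:=R_NormedModule) (M * x)), ex_series_geom. rewrite Rabs_pos_eq; lra.
Qed.

Lemma Cmod_CSeries_sub_sum_n_m_le (m : nat) :
  Cmod (Cminus (CSeries (fun k => f (S k))) (sum_n_m (G:=C_AbelianMonoid) f 1 m))
    <= M * x ^ S m / (1 - x).
Proof.
  apply Cmod_CSeries_sub_le.
  - apply ex_series_shift_of_le_Cmod, re_le_Cmod.
  - apply ex_series_shift_of_le_Cmod, im_le_Cmod.
  - exists m. intros N HN. unfold sum_n. rewrite sum_n_m_S.
    rewrite (sum_n_m_Chasles f 1 m (S N)) by lia.
    replace (Cminus _ _) with (sum_n_m (G:=C_AbelianMonoid) f (S m) (S N)).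
    2:{ change plus with Cplus. destruct (sum_n_m f 1 m), (sum_n_m f (S m) (S N)).
        unfold Cminus, Cplus, Copp. simpl. f_equal; ring. }
    eapply Rle_trans; [apply Cmod_sum_n_m_le_geom; lia|].
    apply Rmult_le_compat_r; [left; apply Rinv_0_lt_compat; lra|].
    pose proof (pow_le x (S (S N)) (proj1 Hx)). nra.
Qed.

End GeometricDomination.

Lemma Re_Cdiv (a b : C) :
  Re (Cdiv a b) = (Re a * Re b + Im a * Im b) / (Re b ^ 2 + Im b ^ 2).
Proof. destruct a as [a1 a2], b as [b1 b2]. unfold Cdiv, Cinv. simpl. unfold Rdiv. ring. Qed.

(* If [|W - Wm| < |Wm| / c], then [W / Wm] lies in the disc of radius [1/c]
   about [1]; the two bounds are those of this disc and of its image under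
   inversion. *)
Lemma Re_Cdiv_ge_of_Cmod_sub_lt (W Wm : C) (c : R) :
  1 <= c -> c * Cmod (Cminus W Wm) < Cmod Wm ->
  Re (Cdiv W Wm) >= 1 - 1 / c /\ Re (Cdiv Wm W) >= c / (1 + c).
Proof.
  intros Hc Hlt.
  assert (HW : W = Cplus Wm (Cminus W Wm)).
  { destruct W, Wm. unfold Cplus, Cminus, Copp. simpl. f_equal; ring. }
  assert (Hsq : c ^ 2 * Cmod (Cminus W Wm) ^ 2 < Cmod Wm ^ 2).
  { assert (0 <= c * Cmod (Cminus W Wm)) by (pose proof (Cmod_ge_0 (Cminus W Wm)); nra).
    rewrite <- Rpow_mult_distr. simpl. nra. }
  rewrite HW, !Re_Cdiv. rewrite !Cmod2_alt in Hsq.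
  set (b := Cminus W Wm) in *. clearbody b. clear HW Hlt.
  destruct Wm as [a1 a2], b as [b1 b2]. unfold Cplus. cbn [Re Im fst snd] in *.
  set (D := a1 ^ 2 + a2 ^ 2) in *. set (B := b1 ^ 2 + b2 ^ 2) in *.
  assert (HB0 : 0 <= B) by (unfold B; nra).
  assert (HD : 0 < D) by (pose proof (pow2_ge_0 c); nra).
  set (ab := a1 * b1 + a2 * b2).
  assert (Hamgm_p : 2 * c * ab <= D + c ^ 2 * B).
  { pose proof (pow2_ge_0 (a1 - c * b1)). pose proof (pow2_ge_0 (a2 - c * b2)).
    unfold D, B, ab. nra. }
  assert (Hamgm_m : - (2 * c * ab) <= D + c ^ 2 * B).
  { pose proof (pow2_ge_0 (a1 + c * b1)). pose proof (pow2_ge_0 (a2 + c * b2)).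
    unfold D, B, ab. nra. }
  assert (Hcs : ab ^ 2 <= D * B).
  { pose proof (pow2_ge_0 (a1 * b2 - a2 * b1)). unfold D, B, ab. nra. }
  replace ((a1 + b1) * a1 + (a2 + b2) * a2) with (D + ab) by (unfold D, ab; ring).
  replace (a1 * (a1 + b1) + a2 * (a2 + b2)) with (D + ab) by (unfold D, ab; ring).
  replace ((a1 + b1) ^ 2 + (a2 + b2) ^ 2) with (D + 2 * ab + B)
    by (unfold D, B, ab; ring).
  assert (HB : B < D) by (assert (1 <= c ^ 2) by nra; nra).
  assert (HDB : 0 < D + 2 * ab + B) by nra.
  split; apply Rle_ge.
  - apply (Rmult_le_reg_r (c * D)); [nra|].
    replace ((D + ab) / D * (c * D)) with (c * D + c * ab) by (field; lra).
    replace ((1 - 1 / c) * (c * D)) with (c * D - D) by (field; lra).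
    nra.
  - apply (Rmult_le_reg_r ((1 + c) * (D + 2 * ab + B))); [nra|].
    replace (c / (1 + c) * ((1 + c) * (D + 2 * ab + B))) with (c * (D + 2 * ab + B))
      by (field; lra).
    replace ((D + ab) / (D + 2 * ab + B) * ((1 + c) * (D + 2 * ab + B))) with ((1 + c) * (D + ab))
      by (field; lra).
    (* [c] times the difference is at least [(1 + c) (D - c^2 B) / 2] by [Hamgm_p]. *)
    nra.
Qed.

Definition series_term (a : nat -> R) (z : C) (n : nat) : C :=
  Cmult (RtoC (a n)) (pow_n (K:=C_Ring) z (S n)).

Lemma Cmod_series_term_le (a : nat -> R) (K x : R) (z : C) (n : nat) :
  (1 <= n)%nat -> Cmod z <= 1 -> Rabs (a n) <= K * x ^ n ->
  Cmod (series_term a z n) <= Cmod z ^ 2 * K * x ^ n.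
Proof.
  intros Hn Hz Ha. unfold series_term.
  rewrite Cmod_mult, Cmod_R, Cmod_pow_n.
  pose proof (Cmod_ge_0 z) as Hz0.
  assert (Hpow : Cmod z ^ S n <= Cmod z ^ 2).
  { destruct n as [|k]; [lia|].
    replace (Cmod z ^ S (S k)) with (Cmod z ^ 2 * Cmod z ^ k) by (simpl; ring).
    pose proof (pow_incr (Cmod z) 1 k (conj Hz0 Hz)). rewrite pow1 in H.
    pose proof (pow2_ge_0 (Cmod z)). nra. }
  pose proof (pow_le _ (S n) Hz0).
  replace (Cmod z ^ 2 * K * x ^ n) with (K * x ^ n * Cmod z ^ 2) by ring.
  apply Rmult_le_compat; auto using Rabs_pos.
Qed.

(* The head of the partial sum costs at most [r^2 K (x - x^(m+1)) / (1 - x)]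
   and [c] times the tail at most [c r^2 K x^(m+1) / (1 - x)]; since [c >= 1]
   their total is at most [r^2 c K x / (1 - x) <= r^2 < r = |z|]. *)
Lemma Cmod_partial_sum_dominates_tail (a : nat -> R) (K x c : R) (m : nat) (z : C) :
  0 <= K -> 0 <= x < 1 -> (forall n, (1 <= n)%nat -> Rabs (a n) <= K * x ^ n) ->
  1 <= c -> c * K * x <= 1 - x -> 0 < Cmod z < 1 ->
  c * Cmod (Cminus (Cplus z (CSeries (fun k => series_term a z (S k))))
                   (Cplus z (sum_n_m (G:=C_AbelianMonoid) (series_term a z) 1 m)))
    < Cmod (Cplus z (sum_n_m (G:=C_AbelianMonoid) (series_term a z) 1 m)).
Proof.
  intros HK Hx Ha Hc HcKx Hz.
  set (r := Cmod z) in *. set (M := r ^ 2 * K). set (f := series_term a z).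
  set (Ser := CSeries (fun k => f (S k))). set (P := sum_n_m (G:=C_AbelianMonoid) f 1 m).
  assert (HM : 0 <= M) by (unfold M; pose proof (pow2_ge_0 r); nra).
  assert (Hf : forall n, (1 <= n)%nat -> Cmod (f n) <= M * x ^ n).
  { intros n Hn. apply Cmod_series_term_le; [exact Hn|fold r; lra|apply Ha, Hn]. }
  pose proof (Cmod_CSeries_sub_sum_n_m_le f M x HM Hx Hf m) as Htail.
  pose proof (Cmod_sum_n_m_le_geom f M x Hx Hf 1 m ltac:(lia)) as Hhead.
  fold Ser P in Htail, Hhead.
  replace (Cminus (Cplus z Ser) (Cplus z P)) with (Cminus Ser P)
    by (destruct z, Ser, P; unfold Cminus, Cplus, Copp; simpl; f_equal; ring).
  assert (Hlow : r - Cmod P <= Cmod (Cplus z P)).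
  { unfold r. replace z with (Cplus (Cplus z P) (Copp P)) at 1
      by (destruct z, P; unfold Cplus, Copp; simpl; f_equal; ring).
    pose proof (Cmod_triangle (Cplus z P) (Copp P)). rewrite Cmod_opp in H. lra. }
  rewrite pow_1 in Hhead. set (y := x ^ S m) in *.
  assert (Hy : 0 <= y <= x).
  { split; [apply pow_le; lra|]. unfold y. simpl.
    pose proof (pow_le x m (proj1 Hx)).
    pose proof (pow_incr x 1 m (conj (proj1 Hx) (Rlt_le _ _ (proj2 Hx)))). rewrite pow1 in H0.
    nra. }
  assert (Hbound : c * (M * y / (1 - x)) + M * (x - y) / (1 - x) <= r ^ 2).
  { apply (Rmult_le_reg_r (1 - x)); [lra|].
    replace ((c * (M * y / (1 - x)) + M * (x - y) / (1 - x)) * (1 - x))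
      with (c * M * y + M * (x - y)) by (field; lra).
    assert (0 <= (c - 1) * M * (x - y)) by (apply Rmult_le_pos; nra).
    assert (r ^ 2 * (c * K * x) <= r ^ 2 * (1 - x))
      by (apply Rmult_le_compat_l; [apply pow2_ge_0|lra]).
    unfold M in *. nra. }
  assert (Hr : r ^ 2 < r) by (simpl; nra).
  pose proof (Rmult_le_compat_l c _ _ (ltac:(lra) : 0 <= c) Htail).
  lra.
Qed.

Definition dini_ratio (alpha v : R) : R :=
  (8 * v + 7) * alpha / (32 * v + 2 * alpha + 32).

Section DiniParameters.

Variables (alpha v : R).
Hypotheses (Ha : 0 < alpha) (Hv : -(7/8) < v)
  (Hcond : 0 <= 8 * (alpha - 4) * v + 5 * alpha - 32).

Lemma one_le_dini_ratio : 1 <= dini_ratio alpha v.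
Proof.
  enough (0 <= dini_ratio alpha v - 1) by lra.
  replace (dini_ratio alpha v - 1)
    with ((8 * (alpha - 4) * v + 5 * alpha - 32) / (32 * v + 2 * alpha + 32))
    by (unfold dini_ratio; field; lra).
  apply Rdiv_le_0_compat; lra.
Qed.

Lemma dini_bound_w_wm_eq :
  (8 * (alpha - 4) * v + 5 * alpha - 32) / ((8 * v + 7) * alpha) = 1 - 1 / dini_ratio alpha v.
Proof. unfold dini_ratio. field. nra. Qed.

Lemma dini_bound_wm_w_eq :
  (8 * v + 7) * alpha / ((8 * v + 7) * alpha + 32 * v + 2 * alpha + 32)
    = dini_ratio alpha v / (1 + dini_ratio alpha v).
Proof. unfold dini_ratio. field. nra. Qed.

Lemma Cmod_w_dini_sub_lt (m : nat) (z : C) : 0 < Cmod z < 1 ->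
  dini_ratio alpha v * Cmod (Cminus (w_dini alpha v z) (w_dini_m alpha v m z))
    < Cmod (w_dini_m alpha v m z).
Proof.
  intros Hz. set (x := / (8 * (v + 1))).
  apply (Cmod_partial_sum_dominates_tail (dini_coef alpha v) ((8 + 2 * alpha) / alpha) x).
  - apply Rdiv_le_0_compat; lra.
  - unfold x. split; [left; apply Rinv_0_lt_compat; lra|].
    rewrite <- Rinv_1. apply Rinv_lt_contravar; lra.
  - intros n _. apply Rabs_dini_coef_le; lra.
  - exact one_le_dini_ratio.
  - enough (0 <= 1 - x - dini_ratio alpha v * ((8 + 2 * alpha) / alpha) * x) by lra.
    replace (1 - x - dini_ratio alpha v * ((8 + 2 * alpha) / alpha) * x)
      with ((8 * v + 7) * (32 * v + 24) / (8 * (v + 1) * (32 * v + 2 * alpha + 32)))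
      by (unfold x, dini_ratio; field; lra).
    apply Rdiv_le_0_compat; nra.
  - exact Hz.
Qed.

End DiniParameters.

Lemma quot_w_wm_0 (alpha v : R) (m : nat) :
  quot_w_wm alpha v m (RtoC 0) = RtoC 1 /\ quot_wm_w alpha v m (RtoC 0) = RtoC 1.
Proof.
  unfold quot_w_wm, quot_wm_w. simpl.
  destruct (Req_EM_T 0 0); [auto|easy].
Qed.

Lemma quot_w_wm_neq0 (alpha v : R) (m : nat) (z : C) : z <> RtoC 0 ->
  quot_w_wm alpha v m z = Cdiv (w_dini alpha v z) (w_dini_m alpha v m z) /\
  quot_wm_w alpha v m z = Cdiv (w_dini_m alpha v m z) (w_dini alpha v z).
Proof.
  intros Hz. unfold quot_w_wm, quot_wm_w.
  destruct (Req_EM_T (Re z) 0) as [Hre|]; [destruct (Req_EM_T (Im z) 0) as [Him|]|]; auto.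
  destruct z as [z1 z2]. simpl in Hre, Him. subst. easy.
Qed.

Theorem theorem2p1 (alpha v : R) (m : nat) :
  0 < alpha -> -(7/8) < v ->
  0 <= 8 * (alpha - 4) * v + 5 * alpha - 32 ->
  forall z : C, Cmod z < 1 ->
    Re (quot_w_wm alpha v m z) >=
      (8 * (alpha - 4) * v + 5 * alpha - 32) / ((8 * v + 7) * alpha)
    /\
    Re (quot_wm_w alpha v m z) >=
      ((8 * v + 7) * alpha) / ((8 * v + 7) * alpha + 32 * v + 2 * alpha + 32).
Proof.
  intros Ha Hv Hcond z Hz.
  rewrite dini_bound_w_wm_eq, dini_bound_wm_w_eq by assumption.
  pose proof (one_le_dini_ratio alpha v Ha Hv Hcond) as Hc.
  destruct (Req_dec (Cmod z) 0) as [Hz0|Hz0].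
  - apply Cmod_eq_0 in Hz0. subst z.
    destruct (quot_w_wm_0 alpha v m) as [-> ->]. simpl.
    assert (0 < 1 / dini_ratio alpha v) by (apply Rdiv_lt_0_compat; lra).
    split; apply Rle_ge; [lra|]. apply Rmult_le_reg_r with (1 + dini_ratio alpha v); [lra|].
    unfold Rdiv. rewrite Rmult_assoc, Rinv_l by lra. lra.
  - destruct (quot_w_wm_neq0 alpha v m z) as [-> ->]; [intros ->; apply Hz0, Cmod_0|].
    apply Re_Cdiv_ge_of_Cmod_sub_lt; [exact Hc|].
    apply Cmod_w_dini_sub_lt; try assumption.
    pose proof (Cmod_ge_0 z). lra.
Qed.
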